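(* Let $(X_n)_{n\ge0}$ be a Bienaym\'e--Galton--Watson branching process with $X_0=1$ and offspring distribution $\mathrm{Bin}(n_0,1/n_0)$, $n_0\ge2$, and let $Y_n=\sum_{k=0}^nX_k$. Then: (a) there exist $c_0>0$ and $p_0>0$ such that $P(Y_n>c_0n^2)\ge p_0/n$ for all $n\ge1$; (b) with these constants, if $\eta_n$ has distribution $\mathrm{Bin}(n,p_0/n)$, then $Y_n[n]$ stochastically dominates $c_0n^2\eta_n$.
   Context: For a random variable $\xi$ and integer $n\ge1$, $\xi[n]$ denotes a random variable distributed as $\sum_{i=1}^n\xi_i$ where $\xi_1,\dots,\xi_n$ are i.i.d. copies of $\xi$. A random variable $U$ stochastically dominates $W$ if $P(U>s)\ge P(W>s)$ for all $s$. *)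

From Stdlib Require Import Reals Arith.
From Coquelicot Require Import Coquelicot.
Open Scope R_scope.

Definition binom_pmf (m : nat) (p : R) (k : nat) : R :=
  if (k <=? m)%nat then Binomial.C m k * p ^ k * (1 - p) ^ (m - k) else 0.

Definition conv (p q : nat -> R) (k : nat) : R :=
  sum_f_R0 (fun i => p i * q (k - i)%nat) k.

(** m-fold convolution power: law of the sum of m i.i.d. copies (xi[m]). *)
Fixpoint convpow (m : nat) (p : nat -> R) : nat -> R :=
  match m with
  | O => fun k => if (k =? 0)%nat then 1 else 0
  | S m' => conv p (convpow m' p)
  end.

Definition offspring (n0 : nat) : nat -> R := binom_pmf n0 (1 / INR n0).

(** Joint law of (X_k, Y_k) for the BGW process with X_0 = 1, Y_k = X_0+...+X_k.
    Markov transition: given X_k = x, X_(k+1) is the sum of x i.i.d. offspring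
    variables (law convpow x offspring), and Y_(k+1) = Y_k + X_(k+1).
    (The sum over x is restricted to x <= Y_k, since X_k <= Y_k always.) *)
Fixpoint gw_joint (n0 : nat) (k : nat) : nat -> nat -> R :=
  match k with
  | O => fun x y => if andb (x =? 1)%nat (y =? 1)%nat then 1 else 0
  | S k' => fun x' y' =>
      if (x' <=? y')%nat then
        sum_f_R0 (fun x => gw_joint n0 k' x (y' - x')%nat
                            * convpow x (offspring n0) x') (y' - x')%nat
      else 0
  end.

Definition Y_pmf (n0 k : nat) (y : nat) : R :=
  sum_f_R0 (fun x => gw_joint n0 k x y) y.

Definition tail (p : nat -> R) (s : R) : R :=
  Series (fun y => if Rlt_dec s (INR y) then p y else 0).

Definition scaled_binom_tail (a : R) (m : nat) (q : R) (s : R) : R :=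
  sum_f_R0 (fun k => if Rlt_dec s (a * INR k) then binom_pmf m q k else 0) m.

(* (a) The offspring law is critical with factorial moments f2 = 1 - 1/n0 and
   f3 = (1 - 1/n0)(1 - 2/n0), so the mixed moments of the chain (X_k, Y_k) obey linear
   recursions: E Y_n = n + 1 and E Y_n^2 >= n^3/6.  Applying
   K^2 (a + b)^3 <= (K + 1)^2 a^3 + K^2 (K + 1)^2 b^3 with K = k + 1 to
   Y_(k+1) = Y_k + X_(k+1) gives E Y_n^3 <= 4 (n + 1)^5.  The cubic minorant
   1{u > 1/24} >= r^2 u^2 - r^2 u / 24 - r^3 u^3 at u = Y_n / n^2 then turns these three
   moments into P(Y_n > n^2/24) >= r^2 / (24 n), for r = 1/3072.

   (b) If P(U > a) >= q and a >= 0, then U[m] dominates a Bin(m, q), by induction on m: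
   conditioning on the first summand, the tail of U[m+1] at s averages the tail of U[m]
   at s - U, which is at least the tail of a Bin(m, q) at s - a on {U > a} and at s
   otherwise; as this tail is antitone in s and P(U > a) >= q, the average is at least
   (1 - q) P(a Bin(m, q) > s) + q P(a Bin(m, q) > s - a) = P(a Bin(m + 1, q) > s). *)

From Stdlib Require Import Reals Arith Lia Lra Psatz.
From Stdlib Require List.
From Coquelicot Require Import Coquelicot.
Import List.ListNotations.
Open Scope list_scope.
Open Scope R_scope.

(** * Finite distributions *)

(* Atoms may repeat: the weight of a point is the sum of the weights of its copies. *)
Notation fdist A := (list (A * R)).

Fixpoint expect {A : Type} (L : fdist A) (f : A -> R) : R :=
  match L with
  | [] => 0
  | a :: L' => snd a * f (fst a) + expect L' f
  end.

Definition mass {A : Type} (L : fdist A) : R := expect L (fun _ => 1).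

Definition nonneg_weights {A : Type} (L : fdist A) : Prop := forall a, List.In a L -> 0 <= snd a.

Definition dmap {A B : Type} (h : A -> B) (L : fdist A) : fdist B :=
  List.map (fun a => (h (fst a), snd a)) L.

Definition dbind {A B : Type} (L : fdist A) (K : A -> fdist B) : fdist B :=
  List.flat_map (fun a => List.map (fun b => (fst b, snd a * snd b)) (K (fst a))) L.

Definition dconv (L M : fdist nat) : fdist nat := dbind L (fun v => dmap (Nat.add v) M).

Fixpoint dpow (m : nat) (L : fdist nat) : fdist nat :=
  match m with
  | O => [(0%nat, 1)]
  | S m' => dconv L (dpow m' L)
  end.

Lemma dpow_S m L : dpow (S m) L = dconv L (dpow m L).
Proof. reflexivity. Qed.

Definition bern (q : R) : fdist nat := [(0%nat, 1 - q); (1%nat, q)].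

Lemma sum_f_R0_indicator (v : nat) (x : R) N :
  sum_f_R0 (fun i => if (v =? i)%nat then x else 0) N = if (v <=? N)%nat then x else 0.
Proof.
  induction N as [|N IH]; simpl.
  - destruct v; reflexivity.
  - rewrite IH.
    destruct (Nat.leb_spec v N), (Nat.eqb_spec v (S N)), (Nat.leb_spec v (S N));
      first [lia | ring].
Qed.

Section Expectation.
Context {A : Type}.
Implicit Types (L : fdist A) (f g : A -> R).

Lemma expect_ext_in L f g :
  (forall a, List.In a L -> f (fst a) = g (fst a)) -> expect L f = expect L g.
Proof.
  induction L as [|a L IH]; intros H; simpl; [reflexivity|].
  rewrite H by (left; reflexivity).
  rewrite IH; [reflexivity|]. intros b Hb; apply H; right; exact Hb.
Qed.

Lemma expect_ext L f g : (forall a, f a = g a) -> expect L f = expect L g.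
Proof. intros H; apply expect_ext_in; intros; apply H. Qed.

Lemma expect_plus L f g : expect L (fun a => f a + g a) = expect L f + expect L g.
Proof. induction L as [|a L IH]; simpl; [|rewrite IH]; ring. Qed.

Lemma expect_scal L c f : expect L (fun a => c * f a) = c * expect L f.
Proof. induction L as [|a L IH]; simpl; [|rewrite IH]; ring. Qed.

Lemma expect_scal_r L c f : expect L (fun a => f a * c) = expect L f * c.
Proof. induction L as [|a L IH]; simpl; [|rewrite IH]; ring. Qed.

Lemma expect_const L c : expect L (fun _ => c) = c * mass L.
Proof. unfold mass; induction L as [|a L IH]; simpl; [|rewrite IH]; ring. Qed.

Lemma expect_zero L f : (forall a, List.In a L -> f (fst a) = 0) -> expect L f = 0.
Proof.
  induction L as [|a L IH]; intros H; simpl; [reflexivity|].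
  rewrite H by (left; reflexivity).
  rewrite IH by (intros b Hb; apply H; right; exact Hb). ring.
Qed.

Lemma expect_app L M f : expect (L ++ M) f = expect L f + expect M f.
Proof. induction L as [|a L IH]; simpl; [|rewrite IH]; ring. Qed.

Lemma expect_le L f g :
  nonneg_weights L -> (forall a, List.In a L -> f (fst a) <= g (fst a)) -> expect L f <= expect L g.
Proof.
  induction L as [|a L IH]; intros Hw H; simpl; [lra|].
  assert (0 <= snd a) by (apply Hw; left; reflexivity).
  assert (f (fst a) <= g (fst a)) by (apply H; left; reflexivity).
  assert (expect L f <= expect L g).
  { apply IH; intros b Hb; [apply Hw | apply H]; right; exact Hb. }
  nra.
Qed.

Lemma expect_sum (F : nat -> A -> R) L N :
  sum_f_R0 (fun i => expect L (F i)) N = expect L (fun a => sum_f_R0 (fun i => F i a) N).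
Proof.
  induction N as [|N IH]; simpl; [reflexivity|].
  rewrite IH, <- expect_plus. reflexivity.
Qed.

Lemma sum_expect_indicator L (g : A -> nat) (h : A -> nat -> R) N :
  sum_f_R0 (fun i => expect L (fun a => if (g a =? i)%nat then h a i else 0)) N
  = expect L (fun a => if (g a <=? N)%nat then h a (g a) else 0).
Proof.
  rewrite expect_sum. apply expect_ext; intros a.
  rewrite <- sum_f_R0_indicator. apply sum_eq; intros i _.
  destruct (Nat.eqb_spec (g a) i); subst; reflexivity.
Qed.

End Expectation.

Lemma expect_dmap {A B} (h : A -> B) (L : fdist A) f :
  expect (dmap h L) f = expect L (fun a => f (h a)).
Proof. induction L as [|a L IH]; simpl; [|rewrite IH]; reflexivity. Qed.

Lemma expect_dbind {A B} (L : fdist A) (K : A -> fdist B) f :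
  expect (dbind L K) f = expect L (fun a => expect (K a) f).
Proof.
  induction L as [|a L IH]; simpl; [reflexivity|].
  rewrite expect_app, IH, <- expect_scal. f_equal.
  induction (K (fst a)) as [|b M IHM]; simpl; [reflexivity|]. rewrite IHM; ring.
Qed.

Lemma nonneg_weights_dmap {A B} (h : A -> B) (L : fdist A) : nonneg_weights L -> nonneg_weights (dmap h L).
Proof.
  intros HL b Hb. apply List.in_map_iff in Hb as [a [<- Ha]]. exact (HL a Ha).
Qed.

Lemma nonneg_weights_dbind {A B} (L : fdist A) (K : A -> fdist B) :
  nonneg_weights L -> (forall a, nonneg_weights (K a)) -> nonneg_weights (dbind L K).
Proof.
  intros HL HK c Hc. apply List.in_flat_map in Hc as [a [Ha Hc]].
  apply List.in_map_iff in Hc as [b [<- Hb]]; simpl.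
  apply Rmult_le_pos; [exact (HL a Ha) | exact (HK (fst a) b Hb)].
Qed.

Lemma in_dbind {A B} (L : fdist A) (K : A -> fdist B) c :
  List.In c (dbind L K) -> exists a b, List.In a L /\ List.In b (K (fst a)) /\ fst c = fst b.
Proof.
  intros Hc. apply List.in_flat_map in Hc as [a [Ha Hc]].
  apply List.in_map_iff in Hc as [b [<- Hb]]. exists a, b; auto.
Qed.

Lemma expect_dconv L M f :
  expect (dconv L M) f = expect L (fun v => expect M (fun u => f (v + u)%nat)).
Proof.
  unfold dconv. rewrite expect_dbind. apply expect_ext; intros v. apply expect_dmap.
Qed.

Lemma nonneg_weights_dpow m L : nonneg_weights L -> nonneg_weights (dpow m L).
Proof.
  intros HL; induction m as [|m IH]; simpl.
  - intros a [<-|[]]; simpl; lra.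
  - apply nonneg_weights_dbind; [exact HL|]. intros v; apply nonneg_weights_dmap, IH.
Qed.

Lemma nonneg_weights_bern q : 0 <= q <= 1 -> nonneg_weights (bern q).
Proof. intros Hq a [<-|[<-|[]]]; simpl; lra. Qed.

Lemma mass_dconv L M : mass (dconv L M) = mass L * mass M.
Proof.
  unfold mass. rewrite expect_dconv, <- expect_scal_r. apply expect_ext; intros; ring.
Qed.

Lemma mass_dpow m L : mass L = 1 -> mass (dpow m L) = 1.
Proof.
  intros HL. induction m as [|m IH]; [unfold mass; simpl; ring|].
  rewrite dpow_S, mass_dconv, HL, IH. ring.
Qed.

(** * Probability mass functions and tails *)

Definition pmf_of (L : fdist nat) (k : nat) : R :=
  expect L (fun v => if (v =? k)%nat then 1 else 0).

Definition ind_gt (s x : R) : R := if Rlt_dec s x then 1 else 0.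

Lemma pmf_of_mul L i c : pmf_of L i * c = expect L (fun v => if (v =? i)%nat then c else 0).
Proof.
  unfold pmf_of. rewrite Rmult_comm, <- expect_scal.
  apply expect_ext; intros v. destruct (v =? i)%nat; ring.
Qed.

Lemma conv_pmf_of L M k : conv (pmf_of L) (pmf_of M) k = pmf_of (dconv L M) k.
Proof.
  unfold conv.
  rewrite (sum_eq _ (fun i => expect L (fun v => if (v =? i)%nat then pmf_of M (k - i) else 0)))
    by (intros i _; apply pmf_of_mul).
  rewrite (sum_expect_indicator L (fun v => v) (fun _ i => pmf_of M (k - i))).
  unfold pmf_of. rewrite expect_dconv. apply expect_ext; intros v.
  destruct (Nat.leb_spec v k).
  - apply expect_ext; intros u.
    destruct (Nat.eqb_spec u (k - v)), (Nat.eqb_spec (v + u) k); try reflexivity; lia.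
  - symmetry; apply expect_zero; intros [u ?] _; cbn [fst].
    destruct (Nat.eqb_spec (v + u) k); first [lia | reflexivity].
Qed.

Lemma conv_ext p p' q q' k :
  (forall i, p i = p' i) -> (forall i, q i = q' i) -> conv p q k = conv p' q' k.
Proof. intros Hp Hq; unfold conv; apply sum_eq; intros; rewrite Hp, Hq; reflexivity. Qed.

Lemma convpow_ext m p p' k :
  (forall i, p i = p' i) -> convpow m p k = convpow m p' k.
Proof.
  revert k; induction m as [|m IH]; intros k H; simpl; [reflexivity|].
  apply conv_ext; [exact H | intros i; apply IH, H].
Qed.

Lemma convpow_pmf_of m L k : convpow m (pmf_of L) k = pmf_of (dpow m L) k.
Proof.
  revert k; induction m as [|m IH]; intros k; simpl.
  - unfold pmf_of; simpl. destruct k; simpl; ring.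
  - rewrite (conv_ext _ (pmf_of L) _ (pmf_of (dpow m L))) by easy.
    apply conv_pmf_of.
Qed.

Lemma bounded_support (L : fdist nat) : exists N, forall a, List.In a L -> (fst a <= N)%nat.
Proof.
  induction L as [|a L [N HN]].
  - exists 0%nat; intros a [].
  - exists (Nat.max (fst a) N). intros b [<-|Hb]; [lia|]. specialize (HN b Hb); lia.
Qed.

Lemma sum_pmf_of L (h : nat -> R) N :
  (forall a, List.In a L -> (fst a <= N)%nat) ->
  sum_f_R0 (fun i => pmf_of L i * h i) N = expect L h.
Proof.
  intros HN.
  rewrite (sum_eq _ (fun i => expect L (fun v => if (v =? i)%nat then h i else 0)))
    by (intros i _; apply pmf_of_mul).
  rewrite (sum_expect_indicator L (fun v => v) (fun _ i => h i)).
  apply expect_ext_in; intros a Ha. specialize (HN a Ha).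
  destruct (Nat.leb_spec (fst a) N); [reflexivity | lia].
Qed.

Lemma Series_finite (f : nat -> R) N :
  (forall k, (N < k)%nat -> f k = 0) -> Series f = sum_f_R0 f N.
Proof.
  intros H. apply is_series_unique. unfold is_series.
  apply filterlim_ext_loc with (fun _ => sum_f_R0 f N); [|apply filterlim_const].
  exists N; intros m Hm. rewrite sum_n_Reals.
  destruct (Nat.eq_dec m N) as [->|Hne]; [reflexivity|].
  rewrite (tech2 f N m) by lia.
  rewrite (sum_eq_R0 (fun i => f (S N + i)%nat)) by (intros; apply H; lia). ring.
Qed.

Lemma tail_ext p p' s : (forall y, p y = p' y) -> tail p s = tail p' s.
Proof. intros H; unfold tail; apply Series_ext; intros y; rewrite H; reflexivity. Qed.

Lemma tail_pmf_of L s : tail (pmf_of L) s = expect L (fun v => ind_gt s (INR v)).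
Proof.
  destruct (bounded_support L) as [N HN]. unfold tail.
  rewrite (Series_finite _ N).
  - rewrite <- (sum_pmf_of L _ N HN). apply sum_eq; intros i _.
    unfold ind_gt; destruct (Rlt_dec s (INR i)); ring.
  - intros k Hk. destruct (Rlt_dec s (INR k)); [|reflexivity].
    unfold pmf_of. apply expect_zero; intros a Ha.
    specialize (HN a Ha). destruct (Nat.eqb_spec (fst a) k); [lia | reflexivity].
Qed.

Lemma C_n_0 n : Binomial.C n 0 = 1.
Proof. unfold Binomial.C. rewrite Nat.sub_0_r. simpl. field. apply INR_fact_neq_0. Qed.

Lemma C_n_n n : Binomial.C n n = 1.
Proof. unfold Binomial.C. rewrite Nat.sub_diag. simpl. field. apply INR_fact_neq_0. Qed.

Lemma binom_pmf_S m q k :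
  binom_pmf (S m) q k
  = (1 - q) * binom_pmf m q k + match k with O => 0 | S k' => q * binom_pmf m q k' end.
Proof.
  unfold binom_pmf. destruct k as [|k].
  - simpl. rewrite !C_n_0, Nat.sub_0_r. simpl. ring.
  - change (S k <=? S m)%nat with (k <=? m)%nat.
    destruct (Nat.leb_spec k m), (Nat.leb_spec (S k) m); try lia.
    + rewrite <- pascal by lia.
      replace (S m - S k)%nat with (S (m - S k)) by lia.
      replace (m - k)%nat with (S (m - S k)) by lia. simpl. ring.
    + replace k with m by lia. rewrite !C_n_n, !Nat.sub_diag. simpl. ring.
    + ring.
Qed.

Lemma binom_pmf_dpow m q k : binom_pmf m q k = pmf_of (dpow m (bern q)) k.
Proof.
  revert k; induction m as [|m IH]; intros k.
  - unfold binom_pmf, pmf_of; simpl. destruct k; simpl; [rewrite C_n_0|]; ring.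
  - rewrite binom_pmf_S. unfold pmf_of. rewrite dpow_S, expect_dconv. simpl.
    rewrite IH. unfold pmf_of. destruct k as [|k].
    + rewrite (expect_zero _ (fun u => if (S u =? 0)%nat then 1 else 0)) by reflexivity. ring.
    + rewrite IH. unfold pmf_of. ring.
Qed.

Lemma dpow_support_le L N m :
  (forall a, List.In a L -> (fst a <= N)%nat) ->
  forall a, List.In a (dpow m L) -> (fst a <= m * N)%nat.
Proof.
  intros HL; induction m as [|m IH]; intros c Hc; simpl in Hc.
  - destruct Hc as [<-|[]]; simpl; lia.
  - apply in_dbind in Hc as (a & b & Ha & Hb & ->).
    apply List.in_map_iff in Hb as (b' & <- & Hb'). simpl.
    specialize (HL a Ha); specialize (IH b' Hb'). lia.
Qed.

Lemma scaled_binom_tail_dpow a m q s :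
  scaled_binom_tail a m q s = expect (dpow m (bern q)) (fun k => ind_gt s (a * INR k)).
Proof.
  unfold scaled_binom_tail.
  rewrite (sum_eq _ (fun k => pmf_of (dpow m (bern q)) k * ind_gt s (a * INR k))).
  - apply sum_pmf_of. intros c Hc.
    enough (fst c <= m * 1)%nat by lia.
    apply (dpow_support_le (bern q)); [|exact Hc].
    intros b [<-|[<-|[]]]; simpl; lia.
  - intros k _. rewrite <- binom_pmf_dpow. unfold ind_gt.
    destruct (Rlt_dec s (a * INR k)); ring.
Qed.

(** * Domination of convolution powers by a scaled binomial *)

Lemma ind_gt_antimono s1 s2 x : s1 <= s2 -> ind_gt s2 x <= ind_gt s1 x.
Proof. intros; unfold ind_gt; destruct (Rlt_dec s2 x), (Rlt_dec s1 x); lra. Qed.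

Lemma ind_gt_shift s x y : ind_gt s (x + y) = ind_gt (s - x) y.
Proof. unfold ind_gt; destruct (Rlt_dec s (x + y)), (Rlt_dec (s - x) y); lra. Qed.

Section Domination.
Variables (L : fdist nat) (a q : R).
Hypotheses (HL : nonneg_weights L) (HL1 : mass L = 1) (Ha : 0 <= a) (Hq : 0 <= q <= 1)
  (Hqa : q <= expect L (fun v => ind_gt a (INR v))).

Let binom_tail m s := expect (dpow m (bern q)) (fun k => ind_gt s (a * INR k)).
Let sum_tail m s := expect (dpow m L) (fun v => ind_gt s (INR v)).

Lemma binom_tail_antimono m s1 s2 : s1 <= s2 -> binom_tail m s2 <= binom_tail m s1.
Proof.
  intros Hs. apply expect_le; [apply nonneg_weights_dpow, nonneg_weights_bern, Hq|].
  intros; apply ind_gt_antimono, Hs.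
Qed.

Lemma binom_tail_S m s : binom_tail (S m) s = (1 - q) * binom_tail m s + q * binom_tail m (s - a).
Proof.
  unfold binom_tail. rewrite dpow_S, expect_dconv. cbn [expect bern fst snd Nat.add].
  rewrite Rplus_0_r. f_equal. f_equal. apply expect_ext; intros u.
  rewrite S_INR, <- ind_gt_shift. f_equal. ring.
Qed.

Lemma sum_tail_S m s : sum_tail (S m) s = expect L (fun v => sum_tail m (s - INR v)).
Proof.
  unfold sum_tail. rewrite dpow_S, expect_dconv.
  apply expect_ext; intros v. apply expect_ext; intros u.
  rewrite plus_INR. apply ind_gt_shift.
Qed.

Lemma binom_tail_le_sum_tail m s : binom_tail m s <= sum_tail m s.
Proof.
  revert s; induction m as [|m IH]; intros s.
  - unfold binom_tail, sum_tail; simpl. rewrite Rmult_0_r. lra.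
  - rewrite sum_tail_S, binom_tail_S.
    set (p := expect L (fun v => ind_gt a (INR v))) in Hqa.
    set (jump := binom_tail m (s - a) - binom_tail m s).
    assert (Hjump : 0 <= jump)
      by (enough (binom_tail m s <= binom_tail m (s - a)) by (unfold jump; lra);
          apply binom_tail_antimono; lra).
    assert (Hmix : forall v : nat,
      binom_tail m s + ind_gt a (INR v) * jump <= binom_tail m (s - INR v)).
    { intros v. pose proof (pos_INR v). unfold ind_gt. destruct (Rlt_dec a (INR v)).
      - enough (binom_tail m (s - a) <= binom_tail m (s - INR v)) by (unfold jump; lra).
        apply binom_tail_antimono; lra.
      - enough (binom_tail m s <= binom_tail m (s - INR v)) by lra.
        apply binom_tail_antimono; lra. }
    assert (Hmix_exp :
      expect L (fun v => binom_tail m s + ind_gt a (INR v) * jump) = binom_tail m s + p * jump).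
    { rewrite expect_plus, expect_const, HL1, expect_scal_r. unfold p. ring. }
    apply Rle_trans with (binom_tail m s + p * jump); [unfold jump in *; nra|].
    rewrite <- Hmix_exp.
    apply Rle_trans with (expect L (fun v => binom_tail m (s - INR v)));
      apply expect_le; try exact HL; intros b _; [apply Hmix | apply IH].
Qed.
End Domination.

(** * Moments up to order three *)

Definition cubic (c0 c1 c2 c3 : R) (u : nat) : R :=
  c0 + c1 * INR u + c2 * INR u ^ 2 + c3 * INR u ^ 3.

Definition has_moments (L : fdist nat) (m1 m2 m3 : R) : Prop :=
  forall c0 c1 c2 c3, expect L (cubic c0 c1 c2 c3) = c0 + c1 * m1 + c2 * m2 + c3 * m3.

Lemma expect_cubic L c0 c1 c2 c3 :
  expect L (cubic c0 c1 c2 c3) = c0 * mass L + c1 * expect L INR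
    + c2 * expect L (fun v => INR v ^ 2) + c3 * expect L (fun v => INR v ^ 3).
Proof.
  unfold mass. induction L as [|a L IH]; cbn [expect]; [ring|].
  rewrite IH. unfold cubic. ring.
Qed.

Lemma has_moments_mass L m1 m2 m3 : has_moments L m1 m2 m3 -> mass L = 1.
Proof.
  intros H. unfold mass. rewrite (expect_ext _ _ (cubic 1 0 0 0)), H; [ring|].
  intros; unfold cubic; ring.
Qed.

Lemma cubic_add c0 c1 c2 c3 v u :
  cubic c0 c1 c2 c3 (v + u)
  = cubic (cubic c0 c1 c2 c3 v) (c1 + 2 * c2 * INR v + 3 * c3 * INR v ^ 2)
      (c2 + 3 * c3 * INR v) c3 u.
Proof. unfold cubic. rewrite plus_INR. ring. Qed.

Lemma has_moments_dconv L M a1 a2 a3 b1 b2 b3 :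
  has_moments L a1 a2 a3 -> has_moments M b1 b2 b3 ->
  has_moments (dconv L M) (a1 + b1) (a2 + 2 * a1 * b1 + b2)
    (a3 + 3 * a2 * b1 + 3 * a1 * b2 + b3).
Proof.
  intros HL HM c0 c1 c2 c3. rewrite expect_dconv.
  rewrite (expect_ext _ _ (cubic (c0 + c1 * b1 + c2 * b2 + c3 * b3)
    (c1 + 2 * c2 * b1 + 3 * c3 * b2) (c2 + 3 * c3 * b1) c3)).
  - rewrite HL. ring.
  - intros v. rewrite (expect_ext _ _ _ (cubic_add c0 c1 c2 c3 v)), HM.
    unfold cubic. ring.
Qed.

Lemma has_moments_dpow L m1 m2 m3 x :
  has_moments L m1 m2 m3 ->
  let X := INR x in
  has_moments (dpow x L) (X * m1) (X * m2 + X * (X - 1) * m1 ^ 2)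
    (X * m3 + 3 * X * (X - 1) * m1 * m2 + X * (X - 1) * (X - 2) * m1 ^ 3).
Proof.
  intros HL. induction x as [|x IH]; intros X c0 c1 c2 c3; subst X.
  - unfold cubic; simpl. ring.
  - rewrite dpow_S, (has_moments_dconv _ _ _ _ _ _ _ _ HL IH), S_INR. ring.
Qed.

Lemma has_moments_bern q : has_moments (bern q) q q q.
Proof. intros c0 c1 c2 c3. unfold cubic; simpl. ring. Qed.

Lemma ind_gt_cubic_minorant r c u :
  0 <= r -> 0 <= c -> 0 <= u -> r ^ 2 * u ^ 2 - r ^ 2 * c * u - r ^ 3 * u ^ 3 <= ind_gt c u.
Proof.
  intros Hr Hc Hu. unfold ind_gt. destruct (Rlt_dec c u) as [Hcu|Hcu].
  - set (w := r * u). assert (0 <= w) by (unfold w; nra).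
    assert (0 <= r ^ 2 * c * u) by (apply Rmult_le_pos; [apply Rmult_le_pos; [nra|]|]; lra).
    replace (r ^ 2 * u ^ 2 - r ^ 2 * c * u - r ^ 3 * u ^ 3)
      with (w ^ 2 * (1 - w) - r ^ 2 * c * u) by (unfold w; ring).
    destruct (Rle_dec w 1); [|nra].
    assert (w ^ 2 <= 1) by nra. nra.
  - apply Rnot_lt_le in Hcu.
    replace (r ^ 2 * u ^ 2 - r ^ 2 * c * u - r ^ 3 * u ^ 3)
      with (r ^ 2 * u * (u - c) - r ^ 3 * u ^ 3) by ring.
    assert (0 <= r ^ 3 * u ^ 3) by (rewrite <- Rpow_mult_distr; apply pow_le; nra).
    assert (0 <= r ^ 2 * u) by (apply Rmult_le_pos; [apply pow2_ge_0 | lra]).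
    nra.
Qed.

Lemma ind_gt_scale s x k : 0 < k -> ind_gt (s * k) (x * k) = ind_gt s x.
Proof.
  intros Hk. unfold ind_gt.
  destruct (Rlt_dec (s * k) (x * k)), (Rlt_dec s x); try reflexivity; exfalso; nra.
Qed.

Lemma tail_lower_bound_from_moments (L : fdist nat) (N : R) :
  nonneg_weights L -> 1 <= N ->
  expect L INR <= 2 * N ->
  N ^ 3 / 6 <= expect L (fun v => INR v ^ 2) ->
  expect L (fun v => INR v ^ 3) <= 128 * N ^ 5 ->
  / 3072 ^ 2 / 24 / N <= expect L (fun v => ind_gt (1 / 24 * N ^ 2) (INR v)).
Proof.
  intros HL HN H1 H2 H3.
  set (r := / 3072).
  assert (Hr : 0 < r) by (unfold r; lra).
  assert (Hpoint : forall v, cubic 0 (- (r ^ 2 / (24 * N ^ 2))) (r ^ 2 / N ^ 4) (- (r ^ 3 / N ^ 6)) v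
                             <= ind_gt (1 / 24 * N ^ 2) (INR v)).
  { intros v. replace (INR v) with (INR v / N ^ 2 * N ^ 2) at 1 by (field; lra).
    rewrite ind_gt_scale by nra.
    unfold cubic. replace (0 + _ + _ + _)
      with (r ^ 2 * (INR v / N ^ 2) ^ 2 - r ^ 2 * (1 / 24) * (INR v / N ^ 2)
            - r ^ 3 * (INR v / N ^ 2) ^ 3) by (field; lra).
    apply ind_gt_cubic_minorant; [lra | lra |].
    apply Rmult_le_pos; [apply pos_INR | apply Rlt_le, Rinv_0_lt_compat; nra]. }
  eapply Rle_trans; [|apply expect_le; [exact HL | intros a _; apply Hpoint]].
  rewrite expect_cubic.
  (* [128 r = 1/24], so the three terms below add up to [t/6 - t/12 - t/24 = t/24]. *)
  set (t := r ^ 2 / N).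
  assert (A1 : r ^ 2 / (24 * N ^ 2) * expect L INR <= t / 12).
  { replace (t / 12) with (r ^ 2 / (24 * N ^ 2) * (2 * N)) by (unfold t; field; lra).
    apply Rmult_le_compat_l; [|exact H1]. apply Rlt_le, Rdiv_lt_0_compat; nra. }
  assert (A2 : t / 6 <= r ^ 2 / N ^ 4 * expect L (fun v => INR v ^ 2)).
  { replace (t / 6) with (r ^ 2 / N ^ 4 * (N ^ 3 / 6)) by (unfold t; field; lra).
    apply Rmult_le_compat_l; [|exact H2]. apply Rlt_le, Rdiv_lt_0_compat; apply pow_lt; lra. }
  assert (A3 : r ^ 3 / N ^ 6 * expect L (fun v => INR v ^ 3) <= t / 24).
  { replace (t / 24) with (r ^ 3 / N ^ 6 * (128 * N ^ 5)) by (unfold t, r; field; lra).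
    apply Rmult_le_compat_l; [|exact H3]. apply Rlt_le, Rdiv_lt_0_compat; apply pow_lt; lra. }
  replace (/ 3072 ^ 2 / 24 / N) with (t / 24) by (unfold t, r; field; lra).
  lra.
Qed.

(** * The Bienaymé-Galton-Watson chain *)

Fixpoint gw_chain (L : fdist nat) (k : nat) : fdist (nat * nat) :=
  match k with
  | O => [((1, 1)%nat, 1)]
  | S k' => dbind (gw_chain L k')
              (fun p => dmap (fun x' => (x', snd p + x')%nat) (dpow (fst p) L))
  end.

Lemma expect_gw_chain_S L k F :
  expect (gw_chain L (S k)) F
  = expect (gw_chain L k) (fun p => expect (dpow (fst p) L) (fun x' => F (x', snd p + x')%nat)).
Proof.
  simpl gw_chain. rewrite expect_dbind. apply expect_ext; intros p. apply expect_dmap.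
Qed.

Lemma gw_chain_fst_le_snd L k p : List.In p (gw_chain L k) -> (fst (fst p) <= snd (fst p))%nat.
Proof.
  destruct k as [|k]; simpl.
  - intros [<-|[]]; simpl; lia.
  - intros Hp. apply in_dbind in Hp as (a & b & _ & Hb & ->).
    apply List.in_map_iff in Hb as (b' & <- & _). simpl. lia.
Qed.

Lemma nonneg_weights_gw_chain L k : nonneg_weights L -> nonneg_weights (gw_chain L k).
Proof.
  intros HL. induction k as [|k IH]; simpl.
  - intros a [<-|[]]; simpl; lra.
  - apply nonneg_weights_dbind; [exact IH|].
    intros p. apply nonneg_weights_dmap, nonneg_weights_dpow, HL.
Qed.

Lemma mass_gw_chain L k : mass L = 1 -> mass (gw_chain L k) = 1.
Proof.
  intros HL. induction k as [|k IH]; [unfold mass; simpl; ring|].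
  unfold mass at 1. rewrite expect_gw_chain_S.
  rewrite (expect_ext _ _ (fun _ => 1)); [exact IH|].
  intros p. apply mass_dpow, HL.
Qed.

Section CriticalMoments.
(* [f2] and [f3] are the factorial moments E[xi (xi - 1)] and E[xi (xi - 1) (xi - 2)] of a
   mean-one offspring variable xi. *)
Variables (L : fdist nat) (f2 f3 : R).
Hypothesis HL : has_moments L 1 (1 + f2) (1 + 3 * f2 + f3).

Definition gw_moment k i j :=
  expect (gw_chain L k) (fun p => INR (fst p) ^ i * INR (snd p) ^ j).

Lemma expect_gw_chain_S_cubic k F (d0 d1 d2 d3 : nat * nat -> R) :
  (forall p x', F (x', snd p + x')%nat = cubic (d0 p) (d1 p) (d2 p) (d3 p) x') ->
  expect (gw_chain L (S k)) F
  = expect (gw_chain L k) (fun p => let X := INR (fst p) in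
      d0 p + d1 p * X + d2 p * (X ^ 2 + f2 * X) + d3 p * (X ^ 3 + 3 * f2 * X ^ 2 + f3 * X)).
Proof.
  intros HF. rewrite expect_gw_chain_S. apply expect_ext; intros p.
  rewrite (expect_ext _ _ _ (HF p)), (has_moments_dpow _ _ _ _ (fst p) HL). cbv zeta. ring.
Qed.

Ltac gw_step d0 d1 d2 d3 :=
  unfold gw_moment at 1;
  rewrite (expect_gw_chain_S_cubic _ _ d0 d1 d2 d3)
    by (intros; unfold cubic; cbn [fst snd]; rewrite ?plus_INR; ring);
  cbv zeta.

Ltac gw_linear :=
  unfold gw_moment; rewrite <- ?expect_scal, <- ?expect_plus;
  apply expect_ext; intros; ring.

Lemma gw_moment_1_0 k : gw_moment k 1 0 = 1.
Proof.
  induction k as [|k IH]; [unfold gw_moment; simpl; ring|].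
  gw_step (fun _ : nat * nat => 0) (fun _ : nat * nat => 1)
    (fun _ : nat * nat => 0) (fun _ : nat * nat => 0).
  transitivity (gw_moment k 1 0); [gw_linear | exact IH].
Qed.

Lemma gw_moment_2_0 k : gw_moment k 2 0 = 1 + f2 * INR k.
Proof.
  induction k as [|k IH]; [unfold gw_moment; simpl; ring|].
  gw_step (fun _ : nat * nat => 0) (fun _ : nat * nat => 0)
    (fun _ : nat * nat => 1) (fun _ : nat * nat => 0).
  transitivity (gw_moment k 2 0 + f2 * gw_moment k 1 0); [gw_linear|].
  rewrite IH, gw_moment_1_0, S_INR. ring.
Qed.

Lemma gw_moment_3_0 k :
  gw_moment k 3 0 = 1 + (3 * f2 + f3) * INR k + 3 / 2 * f2 ^ 2 * INR k * (INR k - 1).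
Proof.
  induction k as [|k IH]; [unfold gw_moment; simpl; ring|].
  gw_step (fun _ : nat * nat => 0) (fun _ : nat * nat => 0)
    (fun _ : nat * nat => 0) (fun _ : nat * nat => 1).
  transitivity (gw_moment k 3 0 + 3 * f2 * gw_moment k 2 0 + f3 * gw_moment k 1 0);
    [gw_linear|].
  rewrite IH, gw_moment_2_0, gw_moment_1_0, S_INR. field.
Qed.

Lemma gw_moment_0_1 k : gw_moment k 0 1 = INR k + 1.
Proof.
  induction k as [|k IH]; [unfold gw_moment; simpl; ring|].
  gw_step (fun p : nat * nat => INR (snd p)) (fun _ : nat * nat => 1)
    (fun _ : nat * nat => 0) (fun _ : nat * nat => 0).
  transitivity (gw_moment k 0 1 + gw_moment k 1 0); [gw_linear|].
  rewrite IH, gw_moment_1_0, S_INR. ring.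
Qed.

Lemma gw_moment_1_1 k : gw_moment k 1 1 = INR k + 1 + f2 / 2 * INR k * (INR k + 1).
Proof.
  induction k as [|k IH]; [unfold gw_moment; simpl; ring|].
  gw_step (fun _ : nat * nat => 0) (fun p : nat * nat => INR (snd p))
    (fun _ : nat * nat => 1) (fun _ : nat * nat => 0).
  transitivity (gw_moment k 1 1 + gw_moment k 2 0 + f2 * gw_moment k 1 0); [gw_linear|].
  rewrite IH, gw_moment_2_0, gw_moment_1_0, S_INR. field.
Qed.

Lemma gw_moment_0_2 k :
  gw_moment k 0 2 = (INR k + 1) ^ 2 + f2 / 6 * INR k * (INR k + 1) * (2 * INR k + 1).
Proof.
  induction k as [|k IH]; [unfold gw_moment; simpl; ring|].
  gw_step (fun p : nat * nat => INR (snd p) ^ 2) (fun p : nat * nat => 2 * INR (snd p))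
    (fun _ : nat * nat => 1) (fun _ : nat * nat => 0).
  transitivity (gw_moment k 0 2 + 2 * gw_moment k 1 1 + gw_moment k 2 0 + f2 * gw_moment k 1 0);
    [gw_linear|].
  rewrite IH, gw_moment_1_1, gw_moment_2_0, gw_moment_1_0, S_INR. field.
Qed.

Hypotheses (HLw : nonneg_weights L) (Hf2 : 0 <= f2 <= 1) (Hf3 : f3 <= 1).

Lemma gw_moment_3_0_le k : gw_moment k 3 0 <= 4 * (INR k + 1) ^ 2.
Proof.
  rewrite gw_moment_3_0.
  assert (Hk : 0 <= INR k * (INR k - 1)).
  { destruct k as [|k]; [simpl; lra|]. rewrite S_INR. pose proof (pos_INR k). nra. }
  pose proof (pos_INR k).
  assert (f2 ^ 2 <= 1) by nra.
  nra.
Qed.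

Lemma cube_add_le a b K :
  0 <= a -> 0 <= b -> 0 <= K -> K ^ 2 * (a + b) ^ 3 <= (K + 1) ^ 2 * a ^ 3 + K ^ 2 * (K + 1) ^ 2 * b ^ 3.
Proof.
  intros Ha Hb HK.
  assert (E : (K + 1) ^ 2 * a ^ 3 + K ^ 2 * (K + 1) ^ 2 * b ^ 3 - K ^ 2 * (a + b) ^ 3
              = (a - K * b) ^ 2 * ((2 * K + 1) * a + (K ^ 2 + 2 * K) * b)) by ring.
  assert (0 <= (a - K * b) ^ 2 * ((2 * K + 1) * a + (K ^ 2 + 2 * K) * b)).
  { apply Rmult_le_pos; [apply pow2_ge_0 | nra]. }
  lra.
Qed.

Lemma cube_bound_step K y a b :
  1 <= K -> K ^ 2 * y <= (K + 1) ^ 2 * a + K ^ 2 * (K + 1) ^ 2 * b ->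
  a <= 4 * K ^ 5 -> b <= 4 * (K + 1) ^ 2 -> y <= 4 * (K + 1) ^ 5.
Proof.
  intros HK Hy Ha Hb.
  assert (HA : (K + 1) ^ 2 * a <= (K + 1) ^ 2 * (4 * K ^ 5))
    by (apply Rmult_le_compat_l; [apply pow2_ge_0 | exact Ha]).
  assert (HB : K ^ 2 * (K + 1) ^ 2 * b <= K ^ 2 * (K + 1) ^ 2 * (4 * (K + 1) ^ 2))
    by (apply Rmult_le_compat_l; [apply Rmult_le_pos; apply pow2_ge_0 | exact Hb]).
  assert (HC : (K + 1) ^ 2 * (4 * K ^ 5) + K ^ 2 * (K + 1) ^ 2 * (4 * (K + 1) ^ 2)
               <= K ^ 2 * (4 * (K + 1) ^ 5)).
  { replace ((K + 1) ^ 2 * (4 * K ^ 5) + K ^ 2 * (K + 1) ^ 2 * (4 * (K + 1) ^ 2))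
      with (4 * K ^ 2 * (K + 1) ^ 2 * (K ^ 3 + (K + 1) ^ 2)) by ring.
    replace (K ^ 2 * (4 * (K + 1) ^ 5)) with (4 * K ^ 2 * (K + 1) ^ 2 * (K + 1) ^ 3) by ring.
    apply Rmult_le_compat_l; [|nra].
    apply Rmult_le_pos; [apply Rmult_le_pos; [lra | apply pow2_ge_0] | apply pow2_ge_0]. }
  apply Rmult_le_reg_l with (K ^ 2); [nra | lra].
Qed.

Lemma gw_moment_0_3_le k : gw_moment k 0 3 <= 4 * (INR k + 1) ^ 5.
Proof.
  induction k as [|k IH]; [unfold gw_moment; simpl; lra|].
  set (K := INR k + 1).
  assert (HK : 1 <= K) by (unfold K; pose proof (pos_INR k); lra).
  assert (Hshift : expect (gw_chain L (S k)) (fun p => (INR (snd p) - INR (fst p)) ^ 3)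
                   = gw_moment k 0 3).
  { rewrite (expect_gw_chain_S_cubic _ _ (fun p => INR (snd p) ^ 3) (fun _ => 0)
              (fun _ => 0) (fun _ => 0)) by (intros; unfold cubic; cbn [fst snd];
                                             rewrite plus_INR; ring).
    unfold gw_moment. apply expect_ext; intros; simpl; ring. }
  assert (Hcube : K ^ 2 * gw_moment (S k) 0 3
                  <= (K + 1) ^ 2 * gw_moment k 0 3 + K ^ 2 * (K + 1) ^ 2 * gw_moment (S k) 3 0).
  { rewrite <- Hshift. unfold gw_moment.
    rewrite <- !expect_scal, <- expect_plus.
    apply expect_le; [apply nonneg_weights_gw_chain, HLw|].
    intros p Hp. pose proof (gw_chain_fst_le_snd L (S k) p Hp) as Hle.
    apply le_INR in Hle. pose proof (pos_INR (fst (fst p))).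
    replace (INR (snd (fst p))) with ((INR (snd (fst p)) - INR (fst (fst p))) + INR (fst (fst p))) at 1
      by ring.
    rewrite !pow_O, !Rmult_1_l, !Rmult_1_r.
    apply cube_add_le; lra. }
  pose proof (gw_moment_3_0_le (S k)) as H30. rewrite S_INR in H30 |- *. fold K in IH, H30 |- *.
  exact (cube_bound_step _ _ _ _ HK Hcube IH H30).
Qed.

Hypothesis Hf2_half : 1 / 2 <= f2.

Lemma expect_total_progeny_pow n j :
  expect (dmap snd (gw_chain L n)) (fun v => INR v ^ j) = gw_moment n 0 j.
Proof. rewrite expect_dmap. apply expect_ext; intros; simpl; ring. Qed.

Lemma gw_total_progeny_tail n : (1 <= n)%nat ->
  / 3072 ^ 2 / 24 / INR n
  <= expect (dmap snd (gw_chain L n)) (fun v => ind_gt (1 / 24 * INR n ^ 2) (INR v)).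
Proof.
  intros Hn. assert (HN : 1 <= INR n) by (apply (le_INR 1); exact Hn).
  apply tail_lower_bound_from_moments; [now apply nonneg_weights_dmap, nonneg_weights_gw_chain | lra | | |].
  - rewrite (expect_ext _ _ (fun v => INR v ^ 1)) by (intros; ring).
    rewrite expect_total_progeny_pow, gw_moment_0_1. lra.
  - rewrite expect_total_progeny_pow, gw_moment_0_2.
    pose proof (pow_le _ 3 (Rle_trans _ _ _ Rle_0_1 HN)).
    nra.
  - rewrite expect_total_progeny_pow.
    apply Rle_trans with (4 * (INR n + 1) ^ 5); [apply gw_moment_0_3_le |].
    assert ((INR n + 1) ^ 5 <= (2 * INR n) ^ 5) by (apply pow_incr; lra).
    replace (128 * INR n ^ 5) with (4 * (2 * INR n) ^ 5) by ring. lra.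
Qed.
End CriticalMoments.

(** * Binomial offspring *)

Definition pmf2 (L : fdist (nat * nat)) (x y : nat) : R :=
  expect L (fun p => if andb (fst p =? x)%nat (snd p =? y)%nat then 1 else 0).

Lemma pmf2_mul L x y c :
  pmf2 L x y * c
  = expect L (fun p => if (fst p =? x)%nat then (if (snd p =? y)%nat then 1 else 0) * c else 0).
Proof.
  unfold pmf2. rewrite <- expect_scal_r. apply expect_ext; intros p.
  destruct (fst p =? x)%nat; simpl; ring.
Qed.

Definition offspring_law (n0 : nat) : fdist nat := dpow n0 (bern (1 / INR n0)).

Lemma offspring_pmf_of n0 k : offspring n0 k = pmf_of (offspring_law n0) k.
Proof. apply binom_pmf_dpow. Qed.

Lemma convpow_offspring n0 x k : convpow x (offspring n0) k = pmf_of (dpow x (offspring_law n0)) k.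
Proof. rewrite (convpow_ext _ _ _ _ (offspring_pmf_of n0)). apply convpow_pmf_of. Qed.

Lemma gw_joint_chain n0 k x y : gw_joint n0 k x y = pmf2 (gw_chain (offspring_law n0) k) x y.
Proof.
  revert x y; induction k as [|k IH]; intros x' y'.
  - unfold pmf2; simpl. destruct x' as [|[|x']], y' as [|[|y']]; simpl; ring.
  - simpl gw_joint. unfold pmf2 at 1. rewrite expect_gw_chain_S.
    destruct (Nat.leb_spec x' y').
    + rewrite (sum_eq _ (fun x => expect (gw_chain (offspring_law n0) k) (fun p =>
          if (fst p =? x)%nat then (if (snd p =? y' - x')%nat then 1 else 0)
                                   * pmf_of (dpow x (offspring_law n0)) x' else 0)))
        by (intros x _; rewrite IH, convpow_offspring; apply pmf2_mul).
      rewrite (sum_expect_indicator _ fst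
        (fun p x => (if (snd p =? y' - x')%nat then 1 else 0) * pmf_of (dpow x (offspring_law n0)) x')).
      apply expect_ext_in; intros a Ha. pose proof (gw_chain_fst_le_snd _ _ _ Ha).
      unfold pmf_of. rewrite <- expect_scal.
      destruct (Nat.eqb_spec (snd (fst a)) (y' - x')),
        (Nat.leb_spec (fst (fst a)) (y' - x')); try lia;
        [apply expect_ext; intros u | apply expect_ext; intros u
        | symmetry; apply expect_zero; intros [u ?] _];
        cbn [fst snd]; destruct (Nat.eqb_spec u x'), (Nat.eqb_spec (snd (fst a) + u) y');
        simpl; try lia; ring.
    + symmetry; apply expect_zero; intros [p ?] _; cbn [fst]. apply expect_zero; intros [u ?] _; cbn [fst].
      cbn [fst snd]. destruct (Nat.eqb_spec u x'), (Nat.eqb_spec (snd p + u) y'); simpl; try lia; reflexivity.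
Qed.

Lemma Y_pmf_chain n0 k y : Y_pmf n0 k y = pmf_of (dmap snd (gw_chain (offspring_law n0) k)) y.
Proof.
  unfold Y_pmf.
  rewrite (sum_eq _ (fun x => expect (gw_chain (offspring_law n0) k) (fun p =>
      if (fst p =? x)%nat then (if (snd p =? y)%nat then 1 else 0) * 1 else 0)))
    by (intros x _; rewrite gw_joint_chain, <- pmf2_mul; ring).
  rewrite (sum_expect_indicator _ fst (fun p _ => (if (snd p =? y)%nat then 1 else 0) * 1)).
  unfold pmf_of. rewrite expect_dmap. apply expect_ext_in; intros a Ha.
  pose proof (gw_chain_fst_le_snd _ _ _ Ha).
  destruct (Nat.eqb_spec (snd (fst a)) y), (Nat.leb_spec (fst (fst a)) y); try lia; ring.
Qed.

Lemma offspring_law_moments n0 : (1 <= n0)%nat ->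
  has_moments (offspring_law n0) 1 (1 + (1 - 1 / INR n0))
    (1 + 3 * (1 - 1 / INR n0) + (1 - 1 / INR n0) * (1 - 2 / INR n0)).
Proof.
  intros Hn0 c0 c1 c2 c3. unfold offspring_law.
  rewrite (has_moments_dpow _ _ _ _ n0 (has_moments_bern _)).
  assert (INR n0 <> 0) by (apply not_0_INR; lia). field; assumption.
Qed.

Lemma nonneg_weights_offspring_law n0 : (1 <= n0)%nat -> nonneg_weights (offspring_law n0).
Proof.
  intros Hn0. assert (1 <= INR n0) by (apply (le_INR 1); exact Hn0).
  apply nonneg_weights_dpow, nonneg_weights_bern. split.
  - apply Rlt_le, Rdiv_lt_0_compat; lra.
  - apply Rmult_le_reg_r with (INR n0); [lra|]. field_simplify; lra.
Qed.

Lemma offspring_total_progeny_tail n0 n : (2 <= n0)%nat -> (1 <= n)%nat ->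
  / 3072 ^ 2 / 24 / INR n
  <= expect (dmap snd (gw_chain (offspring_law n0) n)) (fun v => ind_gt (1 / 24 * INR n ^ 2) (INR v)).
Proof.
  intros Hn0 Hn. assert (H2 : 2 <= INR n0) by (apply (le_INR 2); exact Hn0).
  assert (Hinv : 0 < 1 / INR n0 <= 1 / 2)
    by (split; [apply Rdiv_lt_0_compat | apply Rmult_le_compat_l, Rinv_le_contravar]; lra).
  apply (gw_total_progeny_tail _ _ _ (offspring_law_moments n0 ltac:(lia)));
    [apply nonneg_weights_offspring_law; lia | nra | nra | lra | exact Hn].
Qed.

Theorem lemma2p3 (n0 : nat) (Hn0 : (2 <= n0)%nat) :
  exists c0 p0 : R, 0 < c0 /\ 0 < p0 /\
    (forall n : nat, (1 <= n)%nat ->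
       tail (Y_pmf n0 n) (c0 * INR n ^ 2) >= p0 / INR n) /\
    (forall n : nat, (1 <= n)%nat -> forall s : R,
       tail (convpow n (Y_pmf n0 n)) s
         >= scaled_binom_tail (c0 * INR n ^ 2) n (p0 / INR n) s).
Proof.
  exists (1 / 24), (/ 3072 ^ 2 / 24). repeat split; [lra | lra | |].
  - intros n Hn. rewrite (tail_ext _ _ _ (Y_pmf_chain n0 n)), tail_pmf_of.
    apply Rle_ge, offspring_total_progeny_tail; assumption.
  - intros n Hn s. assert (HN : 1 <= INR n) by (apply (le_INR 1); exact Hn).
    rewrite (tail_ext _ (pmf_of (dpow n (dmap snd (gw_chain (offspring_law n0) n))))),
      tail_pmf_of, scaled_binom_tail_dpow.
    2:{ intros y. rewrite (convpow_ext _ _ _ _ (Y_pmf_chain n0 n)). apply convpow_pmf_of. }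
    apply Rle_ge, binom_tail_le_sum_tail.
    + apply nonneg_weights_dmap, nonneg_weights_gw_chain, nonneg_weights_offspring_law; lia.
    + unfold mass. rewrite expect_dmap. apply mass_gw_chain.
      exact (has_moments_mass _ _ _ _ (offspring_law_moments n0 ltac:(lia))).
    + apply Rmult_le_pos; [lra | apply pow2_ge_0].
    + split; [apply Rlt_le, Rdiv_lt_0_compat; lra|].
      apply Rmult_le_reg_r with (INR n); [lra|]. field_simplify; lra.
    + apply offspring_total_progeny_tail; assumption.
Qed.
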